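(* Let $X$ be a BE-algebra and let $(X,f)$ be an $N$-ideal of $X$. Then $f(y)\le\max\{f(x),f(x*y)\}$ for all $x,y\in X$.
   Context: A BE-algebra is a set $X$ with a binary operation $*$ and a distinguished element $1$ such that for all $x,y,z\in X$: $x*x=1$, $x*1=1$, $1*x=x$, and $x*(y*z)=y*(x*z)$. An ideal of $X$ is a nonempty subset $I\subseteq X$ such that $x*s\in I$ for all $x\in X$, $s\in I$, and $(s*(q*x))*x\in I$ for all $x\in X$ and $s,q\in I$. An $N$-structure on $X$ is a pair $(X,f)$ where $f:X\to[-1,0]$ is any function. For $t\in[-1,0]$ let $C(f;t)=\{x\in X: f(x)\le t\}$. The $N$-structure $(X,f)$ is an $N$-ideal of $X$ if for every $t\in[-1,0]$ the set $C(f;t)$ is either empty or an ideal of $X$. *)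

From Stdlib Require Import Reals.
Open Scope R_scope.

(* A BE-algebra: carrier X, binary operation op (written x*y in the paper), constant one. *)
Record BE_algebra (X : Type) (op : X -> X -> X) (one : X) : Prop := {
  be_refl  : forall x, op x x = one;
  be_one_r : forall x, op x one = one;
  be_one_l : forall x, op one x = x;
  be_exch  : forall x y z, op x (op y z) = op y (op x z)
}.

Definition is_ideal (X : Type) (op : X -> X -> X) (I : X -> Prop) : Prop :=
  (exists s, I s) /\
  (forall x s, I s -> I (op x s)) /\
  (forall x s q, I s -> I q -> I (op (op s (op q x)) x)).

Definition N_structure (X : Type) (f : X -> R) : Prop :=
  forall x, -1 <= f x <= 0.

Definition C_set (X : Type) (f : X -> R) (t : R) : X -> Prop := fun x => f x <= t.

Definition N_ideal (X : Type) (op : X -> X -> X) (f : X -> R) : Prop :=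
  N_structure X f /\
  forall t, -1 <= t <= 0 ->
    (forall x, ~ C_set X f t x) \/ is_ideal X op (C_set X f t).

From Stdlib Require Import Reals Lra.
Open Scope R_scope.

(* An ideal I of a BE-algebra is closed under modus ponens:
   if x and x*y lie in I, then so does ((x*y)*(x*y))*y = 1*y = y, by the
   second ideal axiom with s := x*y and q := x.  Given x and y, take the
   level t := max(f x, f (x*y)), which lies in [-1,0] since f is an
   N-structure.  The level set C(f;t) contains x, so it is not empty and
   hence is an ideal; it also contains x*y, so by modus ponens it contains
   y, i.e. f y <= t. *)

Lemma ideal_modus_ponens (X : Type) (op : X -> X -> X) (one : X)
  (I : X -> Prop) :
  BE_algebra X op one -> is_ideal X op I ->
  forall x y, I x -> I (op x y) -> I y.
Proof.
  intros HX [_ [_ Hclosed]] x y Hx Hxy.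
  assert (Hy : I (op (op (op x y) (op x y)) y)) by exact (Hclosed y _ x Hxy Hx).
  rewrite (be_refl _ _ _ HX), (be_one_l _ _ _ HX) in Hy.
  exact Hy.
Qed.

Lemma N_structure_Rmax_level (X : Type) (f : X -> R) :
  N_structure X f -> forall a b, -1 <= Rmax (f a) (f b) <= 0.
Proof.
  intros HN a b.
  destruct (HN a), (HN b).
  unfold Rmax; destruct (Rle_dec (f a) (f b)); lra.
Qed.

Theorem mainTheorem3 (X : Type) (op : X -> X -> X) (one : X) (f : X -> R)
  (HX : BE_algebra X op one) (Hf : N_ideal X op f) :
  forall x y : X, f y <= Rmax (f x) (f (op x y)).
Proof.
  intros x y.
  destruct Hf as [HN Hlevels].
  set (t := Rmax (f x) (f (op x y))).
  assert (Hx : C_set X f t x) by apply Rmax_l.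
  assert (Hxy : C_set X f t (op x y)) by apply Rmax_r.
  destruct (Hlevels t (N_structure_Rmax_level X f HN x (op x y)))
    as [Hempty | Hideal].
  - exfalso; exact (Hempty x Hx).
  - exact (ideal_modus_ponens X op one _ HX Hideal x y Hx Hxy).
Qed.
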